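(* Let $\Gamma$ be a weighted digraph with normalized matrix of maximum out-forests $\bar J$, let $K$ be the vertex set of a basis bicomponent of $\Gamma$, and let $K^+$ be the set of vertices reachable by directed paths from $K$ and unreachable from all other basis bicomponents. Then: (1) the normalized matrix of maximum out-forests of the restriction $\Gamma_K$ of $\Gamma$ to $K$ coincides with the principal submatrix of $\bar J$ indexed by $K$; (2) if $i\in K^+$ and $j\in K^+\setminus K$ and $\Gamma$ has an arc $(i,j)$, then $\bar J$ does not change when the (positive) weight of this arc is varied.
   Context: A weighted digraph $\Gamma$ has no loops and each arc $(i,j)$ (from $i$ to $j$) has a positive weight. A diverging tree is a rooted directed tree with directed paths from its root to all its other vertices; an out-forest of a digraph is a spanning subgraph whose weak components are diverging trees; a maximum out-forest is one with the maximum number of arcs. The weight of a subgraph is the product of its arc weights. The normalized matrix of maximum out-forests $\bar J$ of a digraph has $(i,j)$ entry equal to the total weight of its maximum out-forests in which $i$ belongs to the tree rooted at $j$, divided by the total weight of all its maximum out-forests. A basis bicomponent is a strong component into which no arc enters from outside it. *)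

From HB Require Import structures.
From mathcomp Require Import all_boot all_order all_algebra.
Set Implicit Arguments. Unset Strict Implicit. Unset Printing Implicit Defensive.
Import Order.TTheory GRing.Theory Num.Theory.
Local Open Scope ring_scope.

(* A weighted digraph on the finite vertex type V is given by a weight
   function w : V -> V -> R; (i,j) is an arc iff w i j != 0.  The
   hypotheses "no loops" (w i i = 0) and "positive weights" (w i j >= 0,
   so arcs have w i j > 0) are imposed in the theorem. *)

Section Digraphs.
Variables (R : realFieldType) (V : finType).

Definition is_arc (w : V -> V -> R) (i j : V) : bool := w i j != 0.

Definition reach (w : V -> V -> R) : rel V := connect (is_arc w).

(* subgraphs are given by their arc sets F : {set V * V} (spanning) *)
Definition frel (F : {set V * V}) : rel V := [rel x y | (x, y) \in F].
Definition wrel (F : {set V * V}) : rel V :=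
  [rel x y | ((x, y) \in F) || ((y, x) \in F)].

Definition wcomp (F : {set V * V}) (x : V) : {set V} :=
  [set y | connect (wrel F) x y].

(* F is an out-forest of Gamma: F is a spanning subgraph of Gamma and each
   weak component C of F is a diverging tree, i.e. a tree (connected, with
   #|C| - 1 arcs) with a root r from which every vertex of C is reachable by
   a directed path in F. *)
Definition out_forest (w : V -> V -> R) (F : {set V * V}) : bool :=
  [forall e in F, is_arc w e.1 e.2] &&
  [forall x : V,
     [exists r in wcomp F x, [forall y in wcomp F x, connect (frel F) r y]]
     && (#|[set e in F | e.1 \in wcomp F x]| == #|wcomp F x| - 1)%N].

Definition out_forests (w : V -> V -> R) : {set {set V * V}} :=
  [set F | out_forest w F].

Definition max_forest_size (w : V -> V -> R) : nat :=
  (\max_(F in out_forests w) #|F|)%N.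

Definition max_out_forests (w : V -> V -> R) : {set {set V * V}} :=
  [set F in out_forests w | #|F| == max_forest_size w].

Definition fweight (w : V -> V -> R) (F : {set V * V}) : R :=
  \prod_(e in F) w e.1 e.2.

Definition in_tree_rooted_at (F : {set V * V}) (i j : V) : bool :=
  [forall k, (k, j) \notin F] && connect (frel F) j i.

Definition Jbar (w : V -> V -> R) (i j : V) : R :=
  (\sum_(F in max_out_forests w | in_tree_rooted_at F i j) fweight w F)
  / (\sum_(F in max_out_forests w) fweight w F).

Definition strong (w : V -> V -> R) (x y : V) : bool :=
  reach w x y && reach w y x.

Definition basis_bicomponent (w : V -> V -> R) (K : {set V}) : bool :=
  [exists x in K, K == [set y | strong w x y]] &&
  [forall i, forall j, ((i \notin K) && (j \in K)) ==> ~~ is_arc w i j].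

Definition Kplus (w : V -> V -> R) (K : {set V}) : {set V} :=
  [set v | [exists k in K, reach w k v] &&
           [forall L : {set V}, (basis_bicomponent w L && (L != K)) ==>
              [forall l in L, ~~ reach w l v]]].

Definition reweight (w : V -> V -> R) (i j : V) (c : R) : V -> V -> R :=
  fun x y => if (x == i) && (y == j) then c else w x y.

End Digraphs.

Definition restrict (R : realFieldType) (V : finType) (w : V -> V -> R)
  (K : {set V}) : {x : V | x \in K} -> {x : V | x \in K} -> R :=
  fun x y => w (val x) (val y).
Arguments restrict {R V} w K x y.

From Pilot Require Import Defs.
From HB Require Import structures.
From mathcomp Require Import all_boot all_order all_algebra.
Set Implicit Arguments. Unset Strict Implicit. Unset Printing Implicit Defensive.
Import Order.TTheory GRing.Theory Num.Theory.

(* 1. Out-forests are the subgraphs of in-degree at most one in which every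
      vertex is reachable from a root ([out_forestP]).  Since arcs plus roots
      count the vertices, the maximum out-forests are exactly the
      "basis-rooted" forests: one root in each basis bicomponent and no other
      root ([max_out_forestsP]).
   2. For a set S closed under predecessors, a maximum out-forest splits into
      its arcs entering S and the others, and any two such parts glue back
      into a maximum out-forest.  Weighted means over maximum out-forests of
      statistics of the two parts therefore factor ([mean_independent]).
   3. Part (1): K is closed under predecessors, the tree relation between
      vertices of K only depends on the inner part, and the inner parts are
      the maximum out-forests of Gamma_K ([Jbar_restrict]).
   4. Part (2): K^+ is closed under predecessors too; wherever the root y
      lies, the tree relation only depends on parts of the forest that
      cannot contain the arc (i,j), so its weight cancels ([Jbar_reweight]). *)

Lemma connect_forward (T : finType) (e : rel T) (P : T -> Prop) x :
  P x -> (forall u v, P u -> e u v -> P v) -> forall y, connect e x y -> P y.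
Proof.
move=> Px step y /connectP [p pth ->].
elim: p x Px pth => //= z p IH x Px /andP[exz pth].
exact: IH (step _ _ Px exz) pth.
Qed.

Lemma connect_backward (T : finType) (e : rel T) (P : T -> Prop) y :
  P y -> (forall u v, P v -> e u v -> P u) -> forall x, connect e x y -> P x.
Proof.
move=> Py step x /connectP [p pth Ey].
elim: p x pth Ey => /= [|z p IH] x; first by move=> _ <-.
by move=> /andP[exz pth] Ey; exact: step _ _ (IH _ pth Ey) exz.
Qed.

Lemma connect_mono (T : finType) (e1 e2 : rel T) :
  subrel e1 e2 -> subrel (connect e1) (connect e2).
Proof. by move=> sub; apply: connect_sub => u v /sub /connect1. Qed.

Lemma connect_last_arc (T : finType) (e : rel T) x y :
  connect e x y -> x != y -> exists2 z, connect e x z & e z y.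
Proof.
move=> /connectP [p pth ->]; case/lastP: p pth => [|p z] /=; first by rewrite eqxx.
by rewrite rcons_path last_rcons => /andP[pth ezy] _; exists (last x p);
  [apply/connectP; exists p | ].
Qed.

(* [Defs.frel] clashes with the function relation of [fingraph]. *)
Local Notation fr := Defs.frel.

Section Forests.
Variables (R : realFieldType) (V : finType).
Implicit Types (w : V -> V -> R) (F A B : {set V * V}).

Definition rootF F r := [forall k, (k, r) \notin F].
Definition indeg_le1 F :=
  forall u u' v, (u, v) \in F -> (u', v) \in F -> u = u'.
Definition arcs_in w F := forall e, e \in F -> is_arc w e.1 e.2.

Definition forest w F :=
  [/\ arcs_in w F, indeg_le1 F & forall v, exists2 r, rootF F r & connect (fr F) r v].

Lemma rootFP F r : reflect (forall k, (k, r) \notin F) (rootF F r).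
Proof. exact: forallP. Qed.

Lemma wrel_sym F : symmetric (wrel F).
Proof. by move=> x y; rewrite /wrel /= orbC. Qed.

Lemma wcomp_arc F x u v : (u, v) \in F -> (u \in wcomp F x) = (v \in wcomp F x).
Proof.
move=> uv; rewrite !inE; apply: same_connect_r; first exact/sym_connect_sym/wrel_sym.
by apply: connect1; rewrite /wrel /= uv.
Qed.

(* In an out-forest in the sense of [Defs], the root of a weak component has
   no entering arc and every vertex of the component has at most one: the
   [#|C| - 1] arcs leaving [C] enter the [#|C| - 1] vertices of [C :\ r]. *)
Lemma out_forest_component w F x : out_forest w F ->
  exists2 r, r \in wcomp F x &
   [/\ rootF F r, (forall y, y \in wcomp F x -> connect (fr F) r y) &
       (forall u u' v, v \in wcomp F x -> (u, v) \in F -> (u', v) \in F -> u = u')].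
Proof.
move=> /andP[_ /forallP /(_ x) /andP[/existsP[r /andP[rC /forallP reach_r]] /eqP cardE]].
set C := wcomp F x in rC reach_r cardE *; set E := [set e in F | e.1 \in C].
have inE_head e : e \in F -> e.2 \in C -> e \in E.
  by case: e => u v /= uv vC; rewrite inE uv (wcomp_arc x uv).
have headsE : C :\ r \subset snd @: E.
  apply/subsetP => y /setD1P[yr yC].
  have ry : r != y by rewrite eq_sym.
  have [z _ zy] := connect_last_arc (implyP (reach_r y) yC) ry.
  by apply/imsetP; exists (z, y) => //; apply: inE_head.
have headsC : snd @: E \subset C.
  apply/subsetP => y /imsetP[[u v]]; rewrite inE /= => /andP[uv uC] ->.
  by rewrite -(wcomp_arc x uv).
have cardCr : #|C :\ r| = #|E| by rewrite cardE (cardsD1 r C) rC add1n subn1.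
have heads_eq : snd @: E = C :\ r.
  apply/esym/eqP; rewrite eqEcard headsE cardCr; exact: leq_imset_card.
have snd_inj : {in E &, injective snd}.
  by apply/imset_injP; rewrite heads_eq cardCr.
exists r => //; split.
- apply/rootFP => k; apply/negP => /inE_head /(_ rC) kr.
  by have := imset_f snd kr; rewrite heads_eq !inE eqxx.
- by move=> y yC; exact: implyP (reach_r y) yC.
- move=> u u' v vC uv u'v.
  by have [] := snd_inj (u, v) (u', v) (inE_head _ uv vC) (inE_head _ u'v vC) erefl.
Qed.

Lemma out_forest_forest w F : out_forest w F -> forest w F.
Proof.
move=> HF; split.
- by move: HF => /andP[/forallP arcsF _] e eF; exact: implyP (arcsF e) eF.
- move=> u u' v uv u'v; have [r _ [_ _ uniq_in]] := out_forest_component v HF.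
  by apply: uniq_in uv u'v; rewrite inE connect0.
- move=> v; have [r rC [rr reach_r _]] := out_forest_component v HF.
  by exists r => //; apply: reach_r; rewrite inE connect0.
Qed.

(* Among vertices reaching a common vertex [v] in a subgraph of in-degree at
   most one, reachability is total: they all lie on the unique path to [v]. *)
Lemma ancestors_total F r r' v : indeg_le1 F ->
  connect (fr F) r v -> connect (fr F) r' v ->
  connect (fr F) r r' \/ connect (fr F) r' r.
Proof.
move=> ind crv cr'v.
have reach_from_r := @connect_forward _ (fr F) (fun u => connect (fr F) r u /\
  (connect (fr F) r' u -> connect (fr F) r r' \/ connect (fr F) r' r))
  r (conj (connect0 _ _) (fun h => or_intror h)).
case: (reach_from_r _ v crv) => [u u0 [cru IH] uu0|_]; last exact.
split; first exact: connect_trans cru (connect1 uu0).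
move=> cr'u0; have [->|ne] := eqVneq r' u0.
  by left; apply: connect_trans cru (connect1 uu0).
have [z cr'z zu0] := connect_last_arc cr'u0 ne.
by apply: IH; rewrite (ind z u u0 zu0 uu0) in cr'z.
Qed.

Lemma root_unique F r r' v : indeg_le1 F -> rootF F r -> rootF F r' ->
  connect (fr F) r v -> connect (fr F) r' v -> r = r'.
Proof.
move=> ind /rootFP rr /rootFP rr' crv cr'v.
have [//|ne] := eqVneq r r'.
case: (ancestors_total ind crv cr'v) => [c|c].
  by have [z _ zr'] := connect_last_arc c ne; move: (rr' z); rewrite (zr' : (z, r') \in F).
have ne' : r' != r by rewrite eq_sym.
have [z _ zr] := connect_last_arc c ne'.
by move: (rr z); rewrite (zr : (z, r) \in F).
Qed.

(* Conversely, in a forest the weak component of [x] consists of the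
   vertices below the root [r] of [x], and the arcs with tail in it enter
   exactly its vertices other than [r]. *)
Lemma forest_out_forest w F : forest w F -> out_forest w F.
Proof.
move=> [arcsF ind rooted]; apply/andP; split.
  by apply/forallP => e; apply/implyP; exact: arcsF.
apply/forallP => x; set C := wcomp F x.
have [r rr crx] := rooted x.
have reach_r y : y \in C -> connect (fr F) r y.
  rewrite inE; apply: (connect_forward (P := connect (fr F) r)) => // u v cru.
  case/orP => [uv|vu]; first exact: connect_trans cru (connect1 uv).
  have [r' rr' cr'v] := rooted v.
  have cr'u := connect_trans cr'v (connect1 (e := fr F) vu).
  by rewrite (root_unique ind rr' rr cr'u cru) in cr'v.
have rC : r \in C.
  rewrite inE (sym_connect_sym (@wrel_sym F)).
  by apply: connect_mono crx => u v uv; rewrite /wrel /= (uv : (u, v) \in F).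
apply/andP; split.
  by apply/existsP; exists r; rewrite rC; apply/forallP => y; apply/implyP; exact: reach_r.
set E := [set e in F | e.1 \in C].
have snd_inj : {in E &, injective snd}.
  move=> [u1 v1] [u2 v2]; rewrite !inE /= => /andP[e1F _] /andP[e2F _] E12.
  by rewrite E12 in e1F *; rewrite (ind _ _ _ e1F e2F).
have heads : snd @: E = C :\ r.
  apply/setP => y; apply/imsetP/setD1P => [[[u v]]|[yr yC]].
    rewrite inE /= => /andP[uv uC] ->; split; last by rewrite -(wcomp_arc x uv).
    by apply/eqP => vr; move/rootFP: rr => /(_ u); rewrite -vr uv.
  have ry : r != y by rewrite eq_sym.
  have [z _ zy] := connect_last_arc (reach_r y yC) ry.
  by exists (z, y); rewrite // inE (zy : (z, y) \in F) /= (wcomp_arc x zy).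
by rewrite -(card_in_imset snd_inj) heads (cardsD1 r C) rC add1n subn1.
Qed.

Lemma out_forestP w F : out_forest w F <-> forest w F.
Proof. by split; [apply: out_forest_forest | apply: forest_out_forest]. Qed.

Lemma forest_reach w F u v : arcs_in w F -> connect (fr F) u v -> reach w u v.
Proof. by move=> arcsF; apply: connect_mono => a b ab; exact: (arcsF (a, b)). Qed.

Definition scc w x := [set y | strong w x y].

Lemma strong_refl w x : strong w x x.
Proof. by rewrite /strong /reach connect0. Qed.

Lemma strong_sym w x y : strong w x y = strong w y x.
Proof. by rewrite /strong andbC. Qed.

Lemma strong_trans w x y z : strong w x y -> strong w y z -> strong w x z.
Proof.
rewrite /strong /reach => /andP[xy yx] /andP[yz zy].
by rewrite (connect_trans xy yz) (connect_trans zy yx).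
Qed.

Lemma scc_eq w x y : strong w x y -> scc w x = scc w y.
Proof.
move=> sxy; apply/setP => z; rewrite !inE; apply/idP/idP; last exact: strong_trans.
by apply: strong_trans; rewrite strong_sym.
Qed.

Definition pred_closed w (S : {set V}) :=
  forall u v, is_arc w u v -> v \in S -> u \in S.

Lemma pred_closed_reach w (S : {set V}) u v :
  pred_closed w S -> reach w u v -> v \in S -> u \in S.
Proof.
move=> cS ruv vS; move: u ruv.
by apply: (connect_backward (P := fun x => x \in S)) => // a b bS ab; exact: cS ab bS.
Qed.

Lemma bb_pred_closed w L : basis_bicomponent w L -> pred_closed w L.
Proof.
move=> /andP[_ /forallP noin] u v uv vL; apply/negPn/negP => uL.
by have := implyP (forallP (noin u) v); rewrite uL vL uv => /(_ isT).
Qed.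

Lemma bb_scc w L z : basis_bicomponent w L -> z \in L -> L = scc w z.
Proof.
move=> /andP[/existsP[x /andP[xL /eqP Lx]] _] zL; rewrite Lx; apply: scc_eq.
by move: zL; rewrite Lx inE.
Qed.

Lemma bb_strong w L x y : basis_bicomponent w L -> x \in L -> y \in L -> strong w x y.
Proof. by move=> bL xL; rewrite (bb_scc bL xL) inE. Qed.

(* Every vertex is reachable from some basis bicomponent: take an ancestor of
   [v] with the fewest ancestors; its strong component has no entering arc. *)
Lemma bb_exists w v :
  exists2 L, basis_bicomponent w L & exists2 l, l \in L & reach w l v.
Proof.
pose anc u := [set x | reach w x u].
have [u uv umin] := @arg_minnP _ v (fun u => reach w u v) (fun u => #|anc u|)
  (connect0 _ v).
exists (scc w u); last by exists u; [rewrite inE strong_refl | exact: uv].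
apply/andP; split; first by apply/existsP; exists u; rewrite inE strong_refl eqxx.
apply/forallP => i; apply/forallP => j; apply/implyP => /andP[iC jC]; apply/negP => ij.
have iu : reach w i u.
  by apply: connect_trans (connect1 ij) _; move: jC; rewrite inE => /andP[].
have := umin i (connect_trans iu uv); apply/negP; rewrite -ltnNge.
apply: proper_card; apply/properP; split.
  by apply/subsetP => x; rewrite !inE => xi; apply: connect_trans xi iu.
exists u; first by rewrite inE /reach connect0.
by rewrite inE; apply/negP => ui; move: iC; rewrite inE /strong ui iu.
Qed.

(* The shape of the maximum out-forests (proved below): a forest whose roots
   lie in basis bicomponents, no two of them in the same strong component. *)
Definition basis_rooted w F := [/\ forest w F,
  (forall r, rootF F r -> basis_bicomponent w (scc w r)) &
  (forall r r', rootF F r -> rootF F r' -> strong w r r' -> r = r')].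

Definition roots F := [set r | rootF F r].

(* Every non-root of a subgraph of in-degree at most one has exactly one
   entering arc, so arcs and roots together count the vertices. *)
Lemma card_arcs_roots F : indeg_le1 F -> #|F| + #|roots F| = #|V|.
Proof.
move=> ind; rewrite -(cardsC (roots F)) addnC; congr (_ + _).
have snd_inj : {in F &, injective snd}.
  move=> [u1 v1] [u2 v2] /= e1F e2F E12.
  by rewrite E12 in e1F *; rewrite (ind _ _ _ e1F e2F).
rewrite -(card_in_imset snd_inj); suff -> : snd @: F = ~: roots F by [].
apply/setP => y; rewrite !inE.
apply/imsetP/idP => [[[u v] uv ->]|].
  by apply/negP => /rootFP /(_ u); rewrite uv.
by move=> /forallPn [k]; rewrite negbK => ky; exists (k, y).
Qed.

(* Every basis bicomponent contains a root of every forest, because it is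
   closed under predecessors. *)
Lemma bb_has_root w F L : forest w F -> basis_bicomponent w L ->
  exists2 r, rootF F r & r \in L.
Proof.
move=> [arcsF _ rooted] bL; have := bL => /andP[/existsP[x /andP[xL _]] _].
have [r rr crx] := rooted x; exists r => //.
exact: pred_closed_reach (bb_pred_closed bL) (forest_reach arcsF crx) xL.
Qed.

(* Comparing an arbitrary forest [F] with a basis-rooted one [G]: every root
   of [G] spans a basis bicomponent containing a root of [F], so [F] has at
   least as many roots, and if it has no more then it is basis-rooted too. *)
Lemma roots_compare w F G : basis_rooted w G -> forest w F ->
  #|roots G| <= #|roots F| /\ (#|roots F| <= #|roots G| -> basis_rooted w F).
Proof.
move=> [fG bbG uniqG] fF.
pose phi g := odflt g [pick r | rootF F r && (r \in scc w g)].
have phiP g : rootF G g -> rootF F (phi g) /\ phi g \in scc w g.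
  move=> gr; have [r rr rC] := bb_has_root fF (bbG g gr).
  rewrite /phi; case: pickP => [r' /andP[]|none] //=.
  by have := none r; rewrite rr rC.
have phi_inj : {in roots G &, injective phi}.
  move=> g1 g2; rewrite !inE => g1r g2r E.
  have [_ c1] := phiP _ g1r; have [_ c2] := phiP _ g2r.
  apply: uniqG g1r g2r _; rewrite E !inE in c1 c2.
  by apply: strong_trans c1 _; rewrite strong_sym.
have phi_sub : phi @: roots G \subset roots F.
  apply/subsetP => r /imsetP[g]; rewrite inE => gr ->; rewrite inE.
  by case: (phiP g gr).
have le : #|roots G| <= #|roots F|.
  by rewrite -(card_in_imset phi_inj) subset_leq_card.
split => // ge.
have phi_onto : phi @: roots G = roots F.
  by apply/eqP; rewrite eqEcard phi_sub card_in_imset.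
have preimage r : rootF F r -> exists2 g, rootF G g & r = phi g.
  move=> rr; have: r \in phi @: roots G by rewrite phi_onto inE.
  by case/imsetP => g; rewrite inE => gr ->; exists g.
split => // [r rr | r r' rr rr' srr'].
  have [g gr ->] := preimage r rr; have [_] := phiP g gr; rewrite inE => sg.
  by rewrite -(scc_eq sg); apply: bbG.
have [g gr Er] := preimage r rr; have [g' g'r Er'] := preimage r' rr'.
have [_ c1] := phiP g gr; have [_ c2] := phiP g' g'r; rewrite !inE in c1 c2.
rewrite Er Er' in srr' *; congr phi; apply: (uniqG _ _ gr g'r).
by apply: (strong_trans c1); apply: (strong_trans srr'); rewrite strong_sym.
Qed.

(* If every vertex is reachable from [R0], the vertices get a rank (the
   length of a shortest path from [R0]) that drops along some entering arc at
   every vertex outside [R0]. *)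
Lemma path_rank_exists (e : rel V) (R0 : {set V}) :
  (forall v, exists2 r, r \in R0 & connect e r v) ->
  exists d : V -> nat, forall v, v \notin R0 -> exists2 u, e u v & d u < d v.
Proof.
move=> covered.
pose P v n := [exists r in R0, exists p : n.-tuple V, path e r p && (last r p == v)].
have P_ex v : exists n, P v n.
  have [r rR /connectP [p pth Ev]] := covered v.
  exists (size p); apply/existsP; exists r; rewrite rR; apply/existsP.
  by exists (in_tuple p); rewrite pth -Ev eqxx.
exists (fun v => ex_minn (P_ex v)) => v vR.
case: ex_minnP => n /existsP[r /andP[rR /existsP[[p /= /eqP sz_p] /andP[pth /eqP Ev]]]] _.
case/lastP: p sz_p pth Ev => [|p z] sz_p pth Ev; first by move: vR; rewrite -Ev rR.
rewrite rcons_path last_rcons in pth Ev; case/andP: pth => pth ezv; subst z.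
exists (last r p) => //; case: ex_minnP => m _ /(_ (size p)); rewrite -sz_p size_rcons.
apply; apply/existsP; exists r; rewrite rR; apply/existsP.
by exists (in_tuple p); rewrite pth eqxx.
Qed.

(* Choosing for each vertex outside [R0] an entering arc along which the rank
   drops yields a spanning forest of Gamma whose roots are exactly [R0]. *)
Lemma spanning_forest w (R0 : {set V}) :
  (forall v, exists2 r, r \in R0 & reach w r v) ->
  exists G, forest w G /\ forall r, rootF G r = (r \in R0).
Proof.
move=> covered; have [d d_drops] := path_rank_exists covered.
pose par v := if v \in R0 then None else [pick u | is_arc w u v && (d u < d v)].
have parP v : v \notin R0 -> exists u, [/\ par v = Some u, is_arc w u v & d u < d v].
  move=> vR; rewrite /par (negbTE vR); case: pickP => [u /andP[]|none]; first by exists u.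
  by have [u uv du] := d_drops v vR; move: (none u); rewrite uv du.
pose G := [set e | par e.2 == Some e.1].
have inG u v : ((u, v) \in G) = (par v == Some u) by rewrite inE.
have rootG r : rootF G r = (r \in R0).
  apply/rootFP/idP => [noin | rR k]; last by rewrite inG /par rR.
  apply/negPn/negP => /parP [u [pu _ _]]; by move: (noin u); rewrite inG pu eqxx.
exists G; split => //; split.
- move=> [u v]; rewrite inG /par /=; case: ifP => // vR.
  by case: pickP => // u' /andP[uv _] /eqP [<-].
- by move=> u u' v; rewrite !inG => /eqP -> /eqP [].
- suff reached n v : d v < n -> exists2 r, rootF G r & connect (fr G) r v.
    by move=> v; apply: (reached (d v).+1).
  elim: n v => // n IH v dvn; have [vR|vR] := boolP (v \in R0).
    by exists v; rewrite ?rootG ?connect0.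
  have [u [pu _ du]] := parP v vR; have [r rr cru] := IH u (leq_trans du dvn).
  exists r => //; apply: connect_trans cru (connect1 _).
  by change ((u, v) \in G); rewrite inG pu.
Qed.

(* Basis-rooted forests exist: root a spanning forest at one chosen vertex of
   each basis bicomponent. *)
Lemma basis_rooted_exists w : exists G, basis_rooted w G.
Proof.
pose R0 := [set x | basis_bicomponent w (scc w x) && (Some x == [pick y in scc w x])].
have pick_rep x : exists2 y, [pick y in scc w x] = Some y & strong w y x.
  case: pickP => [y|/(_ x)]; last by rewrite inE strong_refl.
  by rewrite inE strong_sym => sxy; exists y.
have covered v : exists2 r, r \in R0 & reach w r v.
  have [L bL [l lL lv]] := bb_exists w v; have [y py syl] := pick_rep l.
  exists y; last by move: syl => /andP[yl _]; apply: connect_trans yl lv.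
  by rewrite inE (scc_eq syl) py eqxx andbT -(bb_scc bL lL).
have [G [fG rootG]] := spanning_forest covered.
exists G; split => // [r | r r']; rewrite !rootG !inE; first by case/andP.
move=> /andP[_ /eqP pr] /andP[_ /eqP pr'] srr'.
by move: pr'; rewrite -(scc_eq srr') -pr => -[].
Qed.

(* The maximum out-forests are exactly the basis-rooted forests: by
   [card_arcs_roots], maximizing arcs means minimizing roots. *)
Lemma max_out_forestsP w F : F \in max_out_forests w <-> basis_rooted w F.
Proof.
have [G0 gG0] := basis_rooted_exists w; have fG0 : forest w G0 by case: gG0.
have [_ indG0 _] := fG0.
have size_max H : forest w H -> #|H| <= max_forest_size w.
  move=> fH; apply: (leq_bigmax_cond (F := fun F : {set V * V} => #|F|)).
  by rewrite inE; apply/out_forestP.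
split.
- rewrite !inE => /andP[/out_forestP fF /eqP eqF].
  have [_ indF _] := fF; have [_] := roots_compare gG0 fF; apply.
  rewrite -(leq_add2l #|G0|) (card_arcs_roots indG0) -(card_arcs_roots indF).
  by rewrite leq_add2r eqF size_max.
- move=> gF; have fF : forest w F by case: gF.
  have [_ indF _] := fF.
  rewrite !inE (introT idP (proj2 (out_forestP w F) fF)) /=.
  rewrite eqn_leq size_max //=; apply/bigmax_leqP => H; rewrite inE => /out_forestP fH.
  have [_ indH _] := fH; have [le _] := roots_compare gF fH.
  by rewrite -(leq_add2r #|roots H|) (card_arcs_roots indH) -(card_arcs_roots indF) leq_add2l.
Qed.

(* Splitting a forest along a predecessor-closed set [S]: [inner S F] keeps
   the arcs entering [S] (both of whose ends lie in [S]), [outer S F] the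
   others. *)
Definition inner (S : {set V}) F := [set e in F | e.2 \in S].
Definition outer (S : {set V}) F := [set e in F | e.2 \notin S].

(* What the inner part of a basis-rooted forest looks like on its own: a
   basis-rooted forest spanning [S] only. *)
Definition basis_rooted_on w (S : {set V}) A :=
  [/\ (forall e, e \in A -> is_arc w e.1 e.2 /\ e.2 \in S), indeg_le1 A,
  (forall v, v \in S -> exists2 r, (r \in S) && rootF A r & connect (fr A) r v),
  (forall r, r \in S -> rootF A r -> basis_bicomponent w (scc w r)) &
  (forall r r', r \in S -> r' \in S -> rootF A r -> rootF A r' -> strong w r r' -> r = r')].

Lemma frel_inner (S : {set V}) F a b : fr (inner S F) a b = fr F a b && (b \in S).
Proof. by rewrite /Defs.frel /= inE. Qed.

Lemma frel_outer (S : {set V}) F a b : fr (outer S F) a b = fr F a b && (b \notin S).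
Proof. by rewrite /Defs.frel /= inE. Qed.

Lemma inner_outer_union (S : {set V}) F : F = inner S F :|: outer S F.
Proof. by apply/setP => e; rewrite !inE -andb_orr orbN andbT. Qed.

Lemma rootF_inner (S : {set V}) F r : r \in S -> rootF (inner S F) r = rootF F r.
Proof. by move=> rS; apply: eq_forallb => k; rewrite inE rS andbT. Qed.

Lemma rootF_outer (S : {set V}) F r : r \notin S -> rootF (outer S F) r = rootF F r.
Proof. by move=> rS; apply: eq_forallb => k; rewrite inE rS andbT. Qed.

(* The inner part of a basis-rooted forest is basis-rooted on [S]: its
   vertices are reached within [S], since paths into [S] stay in [S]. *)
Lemma inner_basis_rooted w (S : {set V}) F :
  pred_closed w S -> basis_rooted w F -> basis_rooted_on w S (inner S F).
Proof.
move=> cS [[arcsF ind rooted] bbF uniqF]; split.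
- by move=> e; rewrite inE => /andP[eF e2]; split => //; exact: arcsF.
- by move=> u u' v; rewrite !inE => /andP[uv _] /andP[u'v _]; exact: ind uv u'v.
- move=> v vS; have [r rr crv] := rooted v.
  have := @connect_backward _ (fr F)
    (fun u => u \in S /\ connect (fr (inner S F)) u v) v (conj vS (connect0 _ _)).
  case/(_ _ r crv) => [a b [bS cb] ab|rS cr].
    split; first exact: cS _ _ (arcsF (a, b) ab) bS.
    apply: connect_trans cb; apply: connect1.
    by rewrite frel_inner ab bS.
  by exists r => //; rewrite rS rootF_inner.
- by move=> r rS; rewrite rootF_inner //; apply: bbF.
- by move=> r r' rS r'S; rewrite !rootF_inner //; apply: uniqF.
Qed.

(* Conversely, a basis-rooted forest on [S] glued to the outer part of any
   basis-rooted forest is basis-rooted: no arc of Gamma enters [S]. *)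
Lemma glue_basis_rooted w (S : {set V}) A G :
  pred_closed w S -> basis_rooted_on w S A -> basis_rooted w G ->
  basis_rooted w (A :|: outer S G).
Proof.
move=> cS [arcsA indA rootedA bbA uniqA] [[arcsG indG rootedG] bbG uniqG].
set H := A :|: outer S G.
have inH u v : ((u, v) \in H) = if v \in S then (u, v) \in A else (u, v) \in G.
  rewrite !inE /=; case: ifP => vS; rewrite ?vS ?andbT ?andbF ?orbF //.
  by case: (boolP ((u, v) \in A)) => // /arcsA [_ /= vS']; rewrite vS' in vS.
have rootH r : rootF H r = if r \in S then rootF A r else rootF G r.
  by case: ifP => rS; apply: eq_forallb => k; rewrite inH rS.
have rooted_in_S v : v \in S -> exists2 r, rootF H r & connect (fr H) r v.
  move=> vS; have [r /andP[rS rr] crv] := rootedA v vS.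
  exists r; first by rewrite rootH rS.
  apply: connect_mono crv => a b ab; change ((a, b) \in H).
  by rewrite inE (ab : (a, b) \in A).
split; first split.
- by move=> [u v]; rewrite inH; case: ifP => _ h; [case: (arcsA _ h) | exact: arcsG].
- by move=> u u' v; rewrite !inH; case: ifP => _; [apply: indA | apply: indG].
- move=> v; have [r rr crv] := rootedG v.
  apply: (@connect_forward _ (fr G) (fun u => exists2 r, rootF H r & connect (fr H) r u)
    r _ _ v crv) => [|a b [r' rr' cra] ab].
    have [rS|rS] := boolP (r \in S); first exact: rooted_in_S.
    by exists r; [rewrite rootH (negbTE rS) | apply: connect0].
  have [bS|bS] := boolP (b \in S); first exact: rooted_in_S.
  exists r' => //; apply: connect_trans cra (connect1 _).
  by change ((a, b) \in H); rewrite inH (negbTE bS).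
- by move=> r; rewrite rootH; case: ifP => rS rr; [apply: bbA | apply: bbG].
- move=> r r'; rewrite !rootH => + + srr'; have [rS|rS] := boolP (r \in S).
    have r'S : r' \in S by apply: pred_closed_reach cS _ rS; case/andP: srr'.
    by rewrite r'S => rr rr'; apply: uniqA.
  have r'S : r' \notin S.
    by apply/negP => r'S; move: rS; rewrite (pred_closed_reach cS _ r'S) //; case/andP: srr'.
  by rewrite (negbTE r'S) => rr rr'; apply: uniqG.
Qed.

Lemma glue_parts w (S : {set V}) A G : basis_rooted_on w S A ->
  inner S (A :|: outer S G) = A /\ outer S (A :|: outer S G) = outer S G.
Proof.
move=> [arcsA _ _ _ _]; split; apply/setP => e; rewrite !inE.
  have [eA|eA] /= := boolP (e \in A); first by case: (arcsA e eA) => _ ->.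
  by rewrite -andbA andNb andbF.
have [eA|eA] /= := boolP (e \in A); last by rewrite -andbA andbb.
by case: (arcsA e eA) => _ ->; rewrite !andbF.
Qed.

Local Open Scope ring_scope.

Definition mean w (P : {set {set V * V}}) (X : {set V * V} -> R) :=
  (\sum_(F in P) X F * fweight w F) / (\sum_(F in P) fweight w F).

Lemma JbarE w x y :
  Jbar w x y = mean w (max_out_forests w) (fun F => (in_tree_rooted_at F x y)%:R).
Proof.
rewrite /Jbar /mean big_mkcondr; congr (_ / _); apply: eq_bigr => F _.
by case: ifP; rewrite ?mul1r ?mul0r.
Qed.

Lemma eq_mean w (P : {set {set V * V}}) X Y : {in P, X =1 Y} ->
  mean w P X = mean w P Y.
Proof. by move=> eqXY; congr (_ / _); apply: eq_bigr => F /eqXY ->. Qed.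

Lemma mean0 w (P : {set {set V * V}}) : mean w P (fun=> 0) = 0.
Proof. by rewrite /mean big1 ?mul0r // => F _; rewrite mul0r. Qed.

Lemma mean_reweight w w' (P : {set {set V * V}}) X :
  {in P, fweight w' =1 fweight w} ->
  mean w' P X = mean w P X.
Proof. by move=> eqw; congr (_ / _); apply: eq_bigr => F /eqw ->. Qed.

Lemma fweight_split w (S : {set V}) F :
  fweight w F = fweight w (inner S F) * fweight w (outer S F).
Proof.
by rewrite /fweight (bigID (fun e => e.2 \in S)) /=; congr (_ * _);
  apply: eq_bigl => e; rewrite !inE.
Qed.

Section ClosedSplit.
Variables (w : V -> V -> R) (S : {set V}).
Hypotheses (w_nonneg : forall a b, 0 <= w a b) (cS : pred_closed w S).
Local Notation M := (max_out_forests w).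
Local Notation M1 := (inner S @: max_out_forests w).
Local Notation M2 := (outer S @: max_out_forests w).

(* The maximum out-forests are in bijection with the pairs of an inner and an
   outer part of maximum out-forests, so sums over them factorize. *)
Lemma sum_max_out_forests_split (g h : {set V * V} -> R) :
  \sum_(F in M) g (inner S F) * h (outer S F) =
  (\sum_(A in M1) g A) * (\sum_(B in M2) h B).
Proof.
rewrite (partition_big_imset (inner S)) big_distrl /=; apply: eq_bigr => A MA.
rewrite (eq_bigr (fun F => g A * h (outer S F))); last by move=> F /andP[_ /eqP ->].
rewrite -mulr_sumr; congr (_ * _).
have rA : basis_rooted_on w S A.
  by case/imsetP: MA => F0 /max_out_forestsP F0M ->; apply: inner_basis_rooted.
set D := [set F in M | inner S F == A].
rewrite [LHS](eq_bigl (mem D)); last by move=> F /=; rewrite [in RHS]inE.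
have outer_inj : {in D &, injective (outer S)}.
  move=> F1 F2; rewrite !inE => /andP[_ /eqP E1] /andP[_ /eqP E2] E.
  by rewrite (inner_outer_union S F1) (inner_outer_union S F2) E1 E2 E.
rewrite -(big_imset h outer_inj) /=; apply: eq_bigl => B.
apply/imsetP/imsetP => [[F FD ->]|[G GM ->]].
  by exists F => //; move: FD; rewrite inE => /andP[].
exists (A :|: outer S G); last by case: (glue_parts G rA).
rewrite inE; have [-> _] := glue_parts G rA; rewrite eqxx andbT.
by apply/max_out_forestsP; apply: glue_basis_rooted cS rA _; apply/max_out_forestsP.
Qed.

Lemma fweight_gt0 F : arcs_in w F -> 0 < fweight w F.
Proof.
by move=> arcsF; apply: prodr_gt0 => e /arcsF; rewrite lt_def w_nonneg andbT.
Qed.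

(* The total weight of the inner (outer) parts is positive: they are
   nonempty families of subgraphs of Gamma. *)
Lemma weight_inner_outer_gt0 :
  0 < \sum_(A in M1) fweight w A /\ 0 < \sum_(B in M2) fweight w B.
Proof.
have [G rG] := basis_rooted_exists w.
have GM : G \in M by apply/max_out_forestsP.
have arcsM F : F \in M -> arcs_in w F by move=> /max_out_forestsP [[]].
have part_gt0 (P : {set V * V} -> {set V * V}) :
    (forall F, P F \subset F) -> 0 < \sum_(A in P @: M) fweight w A.
  move=> subF; rewrite (bigD1 (P G)) ?imset_f //=; apply: ltr_pwDl.
    by apply: fweight_gt0 => e /(subsetP (subF G)); apply: arcsM.
  apply: sumr_ge0 => _ /andP[/imsetP[F FM ->] _]; apply: ltW; apply: fweight_gt0.
  by move=> e /(subsetP (subF F)); apply: arcsM.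
by split; apply: part_gt0 => F; apply/subsetP => e; rewrite inE => /andP[].
Qed.

Lemma mean_product (g h : {set V * V} -> R) :
  mean w M (fun F => g (inner S F) * h (outer S F)) = mean w M1 g * mean w M2 h.
Proof.
rewrite /mean mulf_div -!sum_max_out_forests_split.
by congr (_ / _); apply: eq_bigr => F _; rewrite (fweight_split w S F) // mulrACA.
Qed.

Lemma mean_one (P : {set {set V * V}}) :
  0 < \sum_(A in P) fweight w A -> mean w P (fun=> 1) = 1.
Proof.
by move=> pos; rewrite /mean (eq_bigr _ (fun F _ => mul1r _)) divff ?gt_eqF.
Qed.

Lemma mean_inner (g : {set V * V} -> R) :
  mean w M (fun F => g (inner S F)) = mean w M1 g.
Proof.
have [_ pos2] := weight_inner_outer_gt0.
rewrite -[RHS]mulr1 -(mean_one pos2) -mean_product.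
by congr (_ / _); apply: eq_bigr => F _; rewrite mulr1.
Qed.

Lemma mean_outer (h : {set V * V} -> R) :
  mean w M (fun F => h (outer S F)) = mean w M2 h.
Proof.
have [pos1 _] := weight_inner_outer_gt0.
rewrite -[RHS]mul1r -(mean_one pos1) -mean_product.
by congr (_ / _); apply: eq_bigr => F _; rewrite mul1r.
Qed.

Lemma mean_independent (g h : {set V * V} -> R) :
  mean w M (fun F => g (inner S F) * h (outer S F)) =
  mean w M (fun F => g (inner S F)) * mean w M (fun F => h (outer S F)).
Proof. by rewrite mean_product mean_inner mean_outer. Qed.

End ClosedSplit.

Lemma tree_inner w (S : {set V}) F x y : pred_closed w S -> arcs_in w F ->
  x \in S -> y \in S -> in_tree_rooted_at F x y = in_tree_rooted_at (inner S F) x y.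
Proof.
move=> cS arcsF xS yS; rewrite /in_tree_rooted_at.
rewrite -[[forall k, _ \notin inner S F]]/(rootF _ y) rootF_inner //; congr (_ && _).
apply/idP/idP => cyx; last first.
  by apply: connect_mono cyx => a b; rewrite frel_inner => /andP[].
have := @connect_backward _ (fr F) (fun u => u \in S /\ connect (fr (inner S F)) u x) x
  (conj xS (connect0 _ _)).
case/(_ _ y cyx) => [a b [bS cbx] ab|//].
split; first exact: cS _ _ (arcsF (a, b) ab) bS.
apply: connect_trans (connect1 _) cbx.
by rewrite frel_inner ab bS.
Qed.

Lemma tree_outer w (S : {set V}) F x y : pred_closed w S -> arcs_in w F ->
  y \notin S -> in_tree_rooted_at F x y = in_tree_rooted_at (outer S F) x y.
Proof.
move=> cS arcsF yS; rewrite /in_tree_rooted_at.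
rewrite -[[forall k, _ \notin outer S F]]/(rootF _ y) rootF_outer //; congr (_ && _).
apply/idP/idP => cyx; last first.
  by apply: connect_mono cyx => a b; rewrite frel_outer => /andP[].
have := @connect_forward _ (fr F) (fun u => u \notin S /\ connect (fr (outer S F)) y u) y
  (conj yS (connect0 _ _)).
case/(_ _ x cyx) => [a b [aS cya] ab|//].
have bS : b \notin S.
  by apply/negP => bS; move: aS; rewrite (cS _ _ (arcsF (a, b) ab) bS).
split => //; apply: connect_trans cya (connect1 _).
by rewrite frel_outer ab bS.
Qed.

Definition reached_from (S : {set V}) x B :=
  (x \in S) || [exists k in S, connect (fr B) k x].

Lemma reached_from_outer (S : {set V}) F x :
  reached_from S x (outer S F) = [exists k in S, connect (fr F) k x].
Proof.
apply/idP/existsP => [/orP[xS | /existsP[k /andP[kS ck]]] | [k /andP[kS ckx]]].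
- by exists x; rewrite xS connect0.
- exists k; rewrite kS; apply: connect_mono ck => a b.
  by rewrite frel_outer => /andP[].
move: x ckx; apply: (connect_forward (P := fun u => reached_from S u (outer S F))).
  by rewrite /reached_from kS.
move=> a b reach_a ab; rewrite /reached_from; have [//|bS] /= := boolP (b \in S).
have ab_out : fr (outer S F) a b by rewrite frel_outer ab bS.
case/orP: reach_a => [aS | /existsP[k' /andP[k'S ck']]]; apply/existsP.
  by exists a; rewrite aS connect1.
by exists k'; rewrite k'S (connect_trans ck' (connect1 ab_out)).
Qed.

(* For a root [y] in a basis bicomponent [K] of a basis-rooted forest, [x] is
   in the tree of [y] iff [y] is a root of the inner part and [x] is reached
   from [K]: all vertices reached from [K] hang below the unique root in [K]. *)
Lemma tree_bb w K F x y : basis_bicomponent w K -> y \in K -> basis_rooted w F ->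
  in_tree_rooted_at F x y = rootF (inner K F) y && reached_from K x (outer K F).
Proof.
move=> hK yK [[arcsF _ rooted] _ uniqF].
rewrite /in_tree_rooted_at reached_from_outer rootF_inner //.
rewrite -[[forall k, _ \notin F]]/(rootF _ y); have [ry|//] /= := boolP (rootF F y).
apply/idP/existsP => [cyx|[k /andP[kK ckx]]]; first by exists y; rewrite yK.
have [r rr crk] := rooted k.
have rK : r \in K := pred_closed_reach (bb_pred_closed hK) (forest_reach arcsF crk) kK.
by rewrite -(uniqF _ _ rr ry (bb_strong hK rK yK)) (connect_trans crk ckx).
Qed.

Lemma Kplus_bb_unique w K L l v : v \in Kplus w K -> basis_bicomponent w L ->
  l \in L -> reach w l v -> L = K.
Proof.
rewrite inE => /andP[_ /forallP others] bL lL rlv; apply/eqP/negPn/negP => LK.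
have := implyP (others L); rewrite bL LK => /(_ isT) /forallP /(_ l) /implyP /(_ lL).
by rewrite rlv.
Qed.

(* [K^+] is closed under predecessors: a predecessor of [v] is reachable
   from a basis bicomponent, which must be [K]. *)
Lemma Kplus_pred_closed w K : pred_closed w (Kplus w K).
Proof.
move=> u v uv vK; have [L bL [l lL lu]] := bb_exists w u.
have lv : reach w l v by apply: connect_trans lu (connect1 uv).
have LK := Kplus_bb_unique vK bL lL lv; subst L.
rewrite inE; apply/andP; split; first by apply/existsP; exists l; rewrite lL.
apply/forallP => L'; apply/implyP => /andP[bL' L'K]; apply/forallP => l'.
apply/implyP => l'L'; apply/negP => l'u; move: L'K.
by rewrite (Kplus_bb_unique vK bL' l'L' (connect_trans l'u (connect1 uv))) eqxx.
Qed.

Lemma bb_sub_Kplus w K k : basis_bicomponent w K -> k \in K -> k \in Kplus w K.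
Proof.
move=> hK kK; rewrite inE; apply/andP; split.
  by apply/existsP; exists k; rewrite kK /reach connect0.
apply/forallP => L; apply/implyP => /andP[bL LK]; apply/forallP => l.
apply/implyP => lL; apply/negP => lk.
have lK := pred_closed_reach (bb_pred_closed hK) lk kK.
by move: LK; rewrite (bb_scc bL lL) (bb_scc hK lK) eqxx.
Qed.

Lemma Kplus_below_K w K F v : basis_rooted w F -> v \in Kplus w K ->
  exists2 r, r \in K & connect (fr F) r v.
Proof.
move=> [[arcsF _ rooted] bbF _] vK; have [r rr crv] := rooted v.
have rr_scc : r \in scc w r by rewrite inE strong_refl.
have E := Kplus_bb_unique vK (bbF r rr) rr_scc (forest_reach arcsF crv).
by exists r; rewrite // -E.
Qed.

Lemma Kplus_root_in_K w K F y : basis_rooted w F -> y \in Kplus w K ->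
  rootF F y -> y \in K.
Proof.
move=> [_ bbF _] yK ry; have yy : y \in scc w y by rewrite inE strong_refl.
by rewrite -(Kplus_bb_unique yK (bbF y ry) yy (connect0 _ _)).
Qed.

Lemma reached_from_K_Kplus w K F x : basis_bicomponent w K -> basis_rooted w F ->
  [exists k in K, connect (fr F) k x] = [exists k in Kplus w K, connect (fr F) k x].
Proof.
move=> hK rF; apply/existsP/existsP => [[k /andP[kK ck]]|[k /andP[kK ck]]].
  by exists k; rewrite bb_sub_Kplus.
have [r rK crk] := Kplus_below_K rF kK.
by exists r; rewrite rK (connect_trans crk ck).
Qed.

End Forests.

Section Restriction.
Variables (R : realFieldType) (V : finType) (w : V -> V -> R) (K : {set V}).
Hypothesis hK : basis_bicomponent w K.
Local Notation VK := {x : V | x \in K}.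
Local Notation wK := (restrict w K).

Definition emb_arc (e : VK * VK) : V * V := (val e.1, val e.2).
Definition emb (A : {set VK * VK}) := emb_arc @: A.

Lemma emb_arc_inj : injective emb_arc.
Proof. by move=> [a b] [c d] [/val_inj -> /val_inj ->]. Qed.

Lemma mem_emb A a b : ((val a, val b) \in emb A) = ((a, b) \in A).
Proof. by rewrite -[(val a, val b)]/(emb_arc (a, b)) mem_imset //; exact: emb_arc_inj. Qed.

Lemma emb_inj : injective emb.
Proof. by move=> A1 A2 E; apply/setP => [[a b]]; rewrite -!mem_emb E. Qed.

Lemma emb_in_K A u v : (u, v) \in emb A -> u \in K /\ v \in K.
Proof. by case/imsetP => [[a b] _ [-> ->]]; rewrite (valP a) (valP b). Qed.

(* Paths ending in [K] never leave [K], so reachability in a relation on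
   [V] closed backwards on [K] is reachability in its restriction to [K]. *)
Lemma connect_restrict (e : rel V) (eK : rel VK) :
  (forall a b, eK a b = e (val a) (val b)) ->
  (forall u v, e u v -> v \in K -> u \in K) ->
  forall a b, connect e (val a) (val b) = connect eK a b.
Proof.
move=> eKE closedK a b; apply/idP/idP => [cab|]; last first.
  apply: (connect_forward (P := fun z => connect e (val a) (val z))) => // u v cu uv.
  by apply: connect_trans cu (connect1 _); rewrite -eKE.
have := @connect_backward _ e (fun u => exists2 u', val u' = u & connect eK u' b)
  (val b) (ex_intro2 _ _ b erefl (connect0 _ _)).
case/(_ _ _ cab) => [u v [v' <- cv'b] uv | a' /val_inj -> //].
have uK : u \in K by apply: closedK uv (valP v').
exists (Sub u uK); first by rewrite SubK.
by apply: connect_trans (connect1 _) cv'b; rewrite eKE SubK.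
Qed.

Lemma reach_restrict a b : reach w (val a) (val b) = reach wK a b.
Proof. exact: connect_restrict (fun _ _ => erefl) (bb_pred_closed hK) a b. Qed.

Lemma connect_emb A a b : connect (fr (emb A)) (val a) (val b) = connect (fr A) a b.
Proof.
apply: connect_restrict => [u v | u v uv _]; first by rewrite /Defs.frel /= mem_emb.
by case: (emb_in_K uv).
Qed.

Lemma rootF_emb A r : rootF (emb A) (val r) = rootF A r.
Proof.
apply/rootFP/rootFP => noin k; first by rewrite -mem_emb; exact: noin.
by apply/negP => kr; have [kK _] := emb_in_K kr; move: (noin (Sub k kK)); rewrite -mem_emb SubK kr.
Qed.

Lemma fweight_emb A : fweight w (emb A) = fweight wK A.
Proof. by rewrite /fweight /emb big_imset //; exact: in2W emb_arc_inj. Qed.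

Lemma tree_emb A x y :
  in_tree_rooted_at (emb A) (val x) (val y) = in_tree_rooted_at A x y.
Proof.
rewrite /in_tree_rooted_at -[[forall k, _ \notin emb A]]/(rootF _ (val y)).
by rewrite rootF_emb connect_emb.
Qed.

Lemma strong_restrict a b : strong wK a b.
Proof. by rewrite /strong -!reach_restrict; exact: bb_strong hK (valP a) (valP b). Qed.

Lemma bb_restrict a : basis_bicomponent wK (scc wK a).
Proof.
have sccT : scc wK a = setT by apply/setP => b; rewrite !inE strong_restrict.
rewrite sccT; apply/andP; split; first by apply/existsP; exists a; rewrite in_setT /= -sccT eqxx.
by apply/forallP => i; apply/forallP => j; rewrite in_setT.
Qed.

Lemma emb_basis_rooted A : basis_rooted wK A -> basis_rooted_on w K (emb A).
Proof.
move=> [[arcsA indA rootedA] _ uniqA]; split.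
- move=> _ /imsetP[[a b] ab ->] /=; split; [exact: (arcsA (a, b) ab) | exact: valP].
- move=> u u' v /imsetP[[a b] ab [-> ->]] /imsetP[[a' b'] ab' [-> /val_inj Eb]].
  by subst b'; rewrite (indA _ _ _ ab ab').
- move=> v vK; have [r rr crv] := rootedA (Sub v vK).
  exists (val r); first by rewrite (valP r) rootF_emb.
  by rewrite -[v]/(val (Sub v vK : VK)) connect_emb.
- by move=> r rK _; rewrite -(bb_scc hK rK).
- move=> r r' rK r'K; rewrite -[r]/(val (Sub r rK : VK)) -[r']/(val (Sub r' r'K : VK)).
  by rewrite !rootF_emb => rr rr' _; rewrite (uniqA _ _ rr rr' (strong_restrict _ _)).
Qed.

Lemma basis_rooted_of_emb A : basis_rooted_on w K (emb A) -> basis_rooted wK A.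
Proof.
move=> [arcsA indA rootedA _ uniqA]; split; first split.
- by move=> [a b] ab; have [] := arcsA _ (imset_f emb_arc ab).
- by move=> u u' v uv u'v; apply: val_inj; apply: (indA _ _ (val v)); rewrite mem_emb.
- move=> v; have [r /andP[rK rr] crv] := rootedA _ (valP v).
  by exists (Sub r rK); rewrite -?rootF_emb -?connect_emb SubK.
- by move=> r _; apply: bb_restrict.
- move=> r r' rr rr' _; apply: val_inj; apply: uniqA; rewrite ?(valP r) ?(valP r') ?rootF_emb //.
  exact: bb_strong hK (valP r) (valP r').
Qed.

Lemma emb_max_out_forests :
  emb @: max_out_forests wK = inner K @: max_out_forests w.
Proof.
have cK := bb_pred_closed hK; have [G0 rG0] := basis_rooted_exists w.
apply/setP => A; apply/imsetP/imsetP => [[A' /max_out_forestsP rA' ->]|].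
  have rA := emb_basis_rooted rA'.
  exists (emb A' :|: outer K G0); last by case: (glue_parts G0 rA).
  by apply/max_out_forestsP; apply: glue_basis_rooted.
move=> [F /max_out_forestsP rF ->]; have rA := inner_basis_rooted cK rF.
have [arcsA _ _ _ _] := rA.
have embA : inner K F = emb [set e | emb_arc e \in inner K F].
  apply/setP => [[u v]]; apply/idP/idP => [uv|/imsetP[e]]; last by rewrite inE => ? ->.
  have [a1 vK] := arcsA _ uv; have uK : u \in K := cK _ _ a1 vK.
  by rewrite -[u]/(val (Sub u uK : VK)) -[v]/(val (Sub v vK : VK)) mem_emb inE.
exists [set e | emb_arc e \in inner K F] => //.
by apply/max_out_forestsP; apply: basis_rooted_of_emb; rewrite -embA.
Qed.

Local Open Scope ring_scope.

Lemma Jbar_restrict (w_nonneg : forall a b, 0 <= w a b) x y :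
  Jbar wK x y = Jbar w (val x) (val y).
Proof.
have cK := bb_pred_closed hK.
pose in_tree A := (in_tree_rooted_at A (val x) (val y))%:R : R.
rewrite !JbarE (@eq_mean _ _ w _ _ (fun F => in_tree (inner K F))); last first.
  move=> F /max_out_forestsP [[arcsF _ _] _ _].
  by rewrite /in_tree (tree_inner cK arcsF (valP x) (valP y)).
rewrite (mean_inner w_nonneg cK in_tree) -emb_max_out_forests /mean.
rewrite !(big_imset _ (in2W emb_inj)) /=.
by congr (_ / _); apply: eq_bigr => A _; rewrite /in_tree ?tree_emb fweight_emb.
Qed.

End Restriction.

Section Reweighting.
Variables (R : realFieldType) (V : finType) (w : V -> V -> R) (K : {set V}).
Variables (i j : V) (c : R).
Local Open Scope ring_scope.
Hypotheses (w_nonneg : forall a b, 0 <= w a b) (hK : basis_bicomponent w K).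
Hypotheses (ij : is_arc w i j) (c_gt0 : 0 < c).
Local Notation w' := (reweight w i j c).
Local Notation M := (max_out_forests w).
Local Notation M' := (max_out_forests w').

(* Changing the positive weight of an arc keeps the digraph, hence its
   maximum out-forests, unchanged. *)
Lemma is_arc_reweight a b : is_arc w' a b = is_arc w a b.
Proof.
rewrite /is_arc /reweight; case: ifP => // /andP[/eqP -> /eqP ->].
by rewrite gt_eqF.
Qed.

Lemma reweight_nonneg a b : 0 <= w' a b.
Proof. by rewrite /reweight; case: ifP => _; [exact: ltW | exact: w_nonneg]. Qed.

Lemma max_out_forests_reweight : M' = M.
Proof.
have same : out_forests w' = out_forests w.
  apply/setP => F; rewrite !inE /out_forest; congr (_ && _).
  by apply: eq_forallb => e; rewrite is_arc_reweight.
by rewrite /max_out_forests /max_forest_size same.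
Qed.

Lemma pred_closed_reweight S : pred_closed w S -> pred_closed w' S.
Proof. by move=> cS u v; rewrite is_arc_reweight; exact: cS. Qed.

Lemma fweight_reweight (B : {set V * V}) : (i, j) \notin B -> fweight w' B = fweight w B.
Proof.
move=> ijB; apply: eq_bigr => [[a b]] abB /=; rewrite /reweight.
by case: ifP => // /andP[/eqP ai /eqP bj]; move: ijB; rewrite -ai -bj abB.
Qed.

Lemma mean_inner_reweight S g : pred_closed w S -> j \notin S ->
  mean w' M' (fun F => g (inner S F)) = mean w M (fun F => g (inner S F)).
Proof.
move=> cS jS; rewrite (mean_inner reweight_nonneg (pred_closed_reweight cS)).
rewrite (mean_inner w_nonneg cS) max_out_forests_reweight.
apply: mean_reweight => _ /imsetP[F _ ->]; apply: fweight_reweight.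
by rewrite inE negb_and /= jS orbT.
Qed.

Lemma mean_outer_reweight S h : pred_closed w S -> j \in S ->
  mean w' M' (fun F => h (outer S F)) = mean w M (fun F => h (outer S F)).
Proof.
move=> cS jS; rewrite (mean_outer reweight_nonneg (pred_closed_reweight cS)).
rewrite (mean_outer w_nonneg cS) max_out_forests_reweight.
apply: mean_reweight => _ /imsetP[F _ ->]; apply: fweight_reweight.
by rewrite inE jS andbF.
Qed.

Lemma mean_reweight_congr X Y : {in M, X =1 Y} ->
  mean w' M' Y = mean w M Y -> mean w' M' X = mean w M X.
Proof. by move=> XY; rewrite max_out_forests_reweight (eq_mean w' XY) (eq_mean w XY). Qed.

Local Notation in_tree x y := (fun F => (in_tree_rooted_at F x y)%:R : R).

(* Part (2), for roots [y] outside [K^+]: the tree of [y] lies outside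
   [K^+], which contains [j]. *)
Lemma Jbar_reweight_outside x y : j \in Kplus w K -> y \notin Kplus w K ->
  Jbar w' x y = Jbar w x y.
Proof.
move=> jKp yKp; have cKp := @Kplus_pred_closed _ _ w K.
rewrite !JbarE; apply: (mean_reweight_congr (Y := fun F => in_tree x y (outer (Kplus w K) F))).
  by move=> F /max_out_forestsP [[arcsF _ _] _ _]; rewrite (tree_outer x cKp arcsF yKp).
exact: (mean_outer_reweight (in_tree x y) cKp jKp).
Qed.

(* For roots [y] in [K^+ \ K] both sides vanish: no maximum out-forest has a
   root there. *)
Lemma Jbar_reweight_Kplus x y : y \in Kplus w K :\: K -> Jbar w' x y = Jbar w x y.
Proof.
move=> /setDP[yKp yK]; rewrite !JbarE; apply: (mean_reweight_congr (Y := fun=> 0)).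
  move=> F /max_out_forestsP rF; apply/eqP; rewrite pnatr_eq0 eqb0.
  by apply/negP => /andP[/(Kplus_root_in_K rF yKp)]; rewrite (negbTE yK).
by rewrite !mean0.
Qed.

(* For roots [y] in [K], the tree of [y] is determined by the inner part
   along [K], which avoids [(i,j)], and by the vertices reached from [K^+]
   outside [K^+], a statistic of the outer part along [K^+]; these two
   parts are independent. *)
Lemma Jbar_reweight_K x y : j \in Kplus w K :\: K -> y \in K ->
  Jbar w' x y = Jbar w x y.
Proof.
move=> /setDP[jKp jK] yK; have cK := bb_pred_closed hK.
have cKp := @Kplus_pred_closed _ _ w K.
pose is_root A := (rootF A y)%:R : R.
pose reached S B := (reached_from S x B)%:R : R.
rewrite !JbarE.
apply: (mean_reweight_congr (Y := fun F => is_root (inner K F) * reached K (outer K F))).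
  move=> F /max_out_forestsP rF.
  by rewrite (tree_bb x hK yK rF) -mulnb natrM.
rewrite (mean_independent reweight_nonneg (pred_closed_reweight cK)).
rewrite (mean_independent w_nonneg cK) (mean_inner_reweight is_root cK jK).
congr (_ * _).
apply: (mean_reweight_congr (Y := fun F => reached (Kplus w K) (outer (Kplus w K) F))).
  move=> F /max_out_forestsP rF.
  by rewrite /reached !reached_from_outer (reached_from_K_Kplus x hK rF).
exact: (mean_outer_reweight (reached (Kplus w K)) cKp jKp).
Qed.

Lemma Jbar_reweight : j \in Kplus w K :\: K -> Jbar w' =2 Jbar w.
Proof.
move=> jKpK x y; have [yK|yK] := boolP (y \in K); first exact: Jbar_reweight_K.
have [yKp|yKp] := boolP (y \in Kplus w K).
  by apply: Jbar_reweight_Kplus; rewrite inE yK yKp.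
by apply: Jbar_reweight_outside yKp; case/setDP: jKpK.
Qed.

End Reweighting.

Local Open Scope ring_scope.

Theorem corollary2 (R : realFieldType) (V : finType) (w : V -> V -> R)
  (w_noloop : forall i, w i i = 0) (w_nonneg : forall i j, 0 <= w i j)
  (K : {set V}) (hK : basis_bicomponent w K) :
  (forall x y : {x : V | x \in K},
      Jbar (restrict w K) x y = Jbar w (val x) (val y)) /\
  (forall i j : V, i \in Kplus w K -> j \in Kplus w K :\: K ->
      is_arc w i j ->
      forall c : R, 0 < c -> Jbar (reweight w i j c) =2 Jbar w).
Proof.
split; first exact: Jbar_restrict hK w_nonneg.
by move=> i j _ jKpK ij c c_gt0; exact: Jbar_reweight w_nonneg hK ij c_gt0 jKpK.
Qed.
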